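(* Let $\mathcal{F}$ be a strong regular facets-pairing structure on $\mathcal{C}^n$ and let $e\subset f$ be proper faces of $\mathcal{C}^n$ with $\dim f-\dim e=1$. Then either $|\widehat e|=|\widehat f|$ or $|\widehat e|=2|\widehat f|$, where $|\widehat g|$ denotes the number of faces in the face family $\widehat g$.
   Context: Let $[\pm n]=\{\pm1,\dots,\pm n\}$ and $\mathcal{C}^n=\{x\in\mathbb{R}^n: -\tfrac14\le x_i\le\tfrac14\}$. For $1\le i\le n$, $\mathbf{F}(i)$ and $\mathbf{F}(-i)$ denote the facets of $\mathcal{C}^n$ in $\{x_i=\tfrac14\}$ and $\{x_i=-\tfrac14\}$; for $j_1,\dots,j_s\in[\pm n]$ with distinct absolute values, $\mathbf{F}(j_1,\dots,j_s)=\bigcap_i\mathbf{F}(j_i)$ (every proper face has this form). A signed permutation is a bijection $\sigma$ of $[\pm n]$ with $\sigma(-k)=-\sigma(k)$. A facets-pairing structure on $\mathcal{C}^n$ is a pair $(\omega,\{\tau_j\})$ where $\omega$ is a bijection of $[\pm n]$ with $\omega\circ\omega=\mathrm{id}$ and $\tau_j:\mathbf{F}(j)\to\mathbf{F}(\omega(j))$ are face-preserving homeomorphisms with $\tau_{\omega(j)}=\tau_j^{-1}$, such that for all $|j|\ne|k|$, writing $\tau_j(\mathbf{F}(j,k))=\mathbf{F}(\omega(j),k')$ and $\tau_k(\mathbf{F}(j,k))=\mathbf{F}(j',\omega(k))$, one has $\tau_{k'}\tau_j(p)=\tau_{j'}\tau_k(p)$ for all $p\in\mathbf{F}(j,k)$.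 It is regular if each $\tau_j$ is a Euclidean isometry and $\omega$ is a signed permutation. A composition $\tau_{k_m}\circ\dots\circ\tau_{k_1}$ applied to a proper face $f$ is valid if $f\subset\mathbf{F}(k_1)$ and $\tau_{k_i}\circ\dots\circ\tau_{k_1}(f)\subset\mathbf{F}(k_{i+1})$ for $1\le i<m$ ($m=0$ allowed). The face family $\widehat f$ is the set of faces $\tau_{k_m}\circ\dots\circ\tau_{k_1}(f)$ over all valid compositions. For a proper face $f$ let $\Xi(f)$ be the set of facets containing $f$. If $f\subset\mathbf{F}(k)$ and $f'=\tau_k(f)$, define $\Psi^f_k:\Xi(f)\to\Xi(f')$ by $\Psi^f_k(\mathbf{F}(k))=\mathbf{F}(\omega(k))$ and, for $F'\in\Xi(f)\setminus\{\mathbf{F}(k)\}$, $\Psi^f_k(F')$ is the facet $G$ with $G\cap\mathbf{F}(\omega(k))=\tau_k(F'\cap\mathbf{F}(k))$. $\mathcal{F}$ is strong if for every proper face $f$ and any two valid compositions mapping $f$ onto the same face $\widetilde f$: (a) they agree at every point of $f$; and (b) the corresponding composites of the maps $\Psi$ along the two compositions coincide as maps $\Xi(f)\to\Xi(\widetilde f)$. *)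

From Stdlib Require Import Reals ClassicalEpsilon.
From mathcomp Require Import all_boot.
Set Implicit Arguments. Unset Strict Implicit. Unset Printing Implicit Defensive.
Local Open Scope R_scope.

Definition point (n : nat) := 'I_n -> R.
Definition pset (n : nat) := point n -> Prop.

(* Signed indices [±n]: (i, true) stands for +(i+1), (i, false) for -(i+1). *)
Definition signed (n : nat) := ('I_n * bool)%type.
Definition sneg n (j : signed n) : signed n := (j.1, ~~ j.2).

(* A face label: for each coordinate, None = free, Some true = fixed at 1/4,
   Some false = fixed at -1/4.  The label with fixed coordinates j_1..j_s
   encodes F(j_1,...,j_s); proper_face faces are those with at least one fixed
   coordinate. *)
Definition label (n : nat) := {ffun 'I_n -> option bool}.
Definition bnd (b : bool) : R := if b then (Rinv 4) else (- Rinv 4).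

Definition cube n (x : point n) : Prop := forall i, (- Rinv 4 <= x i <= Rinv 4).
Definition face_set n (l : label n) : pset n :=
  fun x => cube x /\ forall i b, l i = Some b -> x i = bnd b.
Definition proper_face n (l : label n) : bool := [exists i, l i != None].
Definition fdim n (l : label n) : nat := #|[pred i | l i == None]|.

Definition facet_label n (j : signed n) : label n :=
  [ffun i => if i == j.1 then Some j.2 else None].
Definition facet n (j : signed n) : pset n := face_set (facet_label j).
Definition F2 n (j k : signed n) : pset n := fun x => facet j x /\ facet k x.

Definition psub n (A B : pset n) : Prop := forall x, A x -> B x.
Definition seteq n (A B : pset n) : Prop := forall x, A x <-> B x.
Definition img n (t : point n -> point n) (A : pset n) : pset n :=
  fun y => exists x, A x /\ y = t x.
Definition is_face n (A : pset n) : Prop :=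
  exists l : label n, proper_face l /\ seteq A (face_set l).

Definition dist2 n (x y : point n) : R :=
  \big[Rplus/0]_(i < n) ((x i - y i) * (x i - y i)).

(* Facets-pairing structure (omega, {tau_j}); tau_j is given as a total map,
   only its restriction to F(j) matters. *)
Definition is_fps n (om : signed n -> signed n)
    (tau : signed n -> point n -> point n) : Prop :=
  (forall j, om (om j) = j) /\
  (forall j, psub (img (tau j) (facet j)) (facet (om j))) /\
  (forall j, psub (facet (om j)) (img (tau j) (facet j))) /\
  (forall j x y, facet j x -> facet j y -> tau j x = tau j y -> x = y) /\
  (forall j (l : label n), proper_face l -> psub (face_set l) (facet j) ->
      is_face (img (tau j) (face_set l))) /\
  (forall j x, facet j x -> tau (om j) (tau j x) = x) /\
  (forall j k k' j', j.1 != k.1 ->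
      seteq (img (tau j) (F2 j k)) (F2 (om j) k') ->
      seteq (img (tau k) (F2 j k)) (F2 j' (om k)) ->
      forall p, F2 j k p -> tau k' (tau j p) = tau j' (tau k p)).

Definition signed_perm n (om : signed n -> signed n) : Prop :=
  bijective om /\ forall j, om (sneg j) = sneg (om j).

Definition regular n (om : signed n -> signed n)
    (tau : signed n -> point n -> point n) : Prop :=
  [/\ is_fps om tau, signed_perm om &
      forall j x y, facet j x -> facet j y ->
        dist2 (tau j x) (tau j y) = dist2 x y].

(* Valid compositions tau_{k_m} o ... o tau_{k_1} applied to a set S,
   ks = [:: k_1; ...; k_m]. *)
Fixpoint valid n (tau : signed n -> point n -> point n) (S : pset n)
    (ks : seq (signed n)) : Prop :=
  match ks with
  | [::] => True
  | k :: ks' => psub S (facet k) /\ valid tau (img (tau k) S) ks'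
  end.

Fixpoint tcomp n (tau : signed n -> point n -> point n)
    (ks : seq (signed n)) (x : point n) : point n :=
  match ks with
  | [::] => x
  | k :: ks' => tcomp tau ks' (tau k x)
  end.

Definition in_family n (tau : signed n -> point n -> point n) (f g : label n)
  : Prop :=
  exists ks, valid tau (face_set f) ks /\
             seteq (img (tcomp tau ks) (face_set f)) (face_set g).

Definition asbool (P : Prop) : bool :=
  if excluded_middle_informative P then true else false.

Definition face_family n (tau : signed n -> point n -> point n) (f : label n)
  : {set label n} := [set g | asbool (in_family tau f g)].

(* Psi_k (facets identified with signed indices): psi_rel k a b means
   Psi_k(F(a)) = F(b). *)
Definition psi_rel n (om : signed n -> signed n)
    (tau : signed n -> point n -> point n) (k a b : signed n) : Prop :=
  (a = k /\ b = om k) \/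
  (a <> k /\ seteq (F2 b (om k)) (img (tau k) (F2 a k))).

Fixpoint psi_chain n (om : signed n -> signed n)
    (tau : signed n -> point n -> point n) (ks : seq (signed n))
    (a b : signed n) : Prop :=
  match ks with
  | [::] => a = b
  | k :: ks' => exists c, psi_rel om tau k a c /\ psi_chain om tau ks' c b
  end.

Definition strong n (om : signed n -> signed n)
    (tau : signed n -> point n -> point n) : Prop :=
  forall (f g : label n) (ks1 ks2 : seq (signed n)),
    proper_face f ->
    valid tau (face_set f) ks1 -> valid tau (face_set f) ks2 ->
    seteq (img (tcomp tau ks1) (face_set f)) (face_set g) ->
    seteq (img (tcomp tau ks2) (face_set f)) (face_set g) ->
    (forall p, face_set f p -> tcomp tau ks1 p = tcomp tau ks2 p) /\
    (forall a b1 b2, psub (face_set f) (facet a) ->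
       psi_chain om tau ks1 a b1 -> psi_chain om tau ks2 a b2 -> b1 = b2).

From Stdlib Require Import Reals ClassicalEpsilon Lra.
From mathcomp Require Import all_boot.
Set Implicit Arguments. Unset Strict Implicit. Unset Printing Implicit Defensive.

(* Since dim f = dim e + 1, exactly one facet F(a0) contains e but not f.  A
   composition sigma that is valid for f carries e along with f, and its Psi-chain
   sends F(a0) to the unique facet F(c) that contains sigma(e) but not sigma(f).
   Every face of the family of e is either such a sigma(e) or its reflection
   tau_c(sigma(e)) through F(c): by the cycle condition, crossing any other facet
   of a reflected face is a move along f followed by a reflection.  Strongness
   makes sigma(e) |-> sigma(f) and sigma(e) |-> tau_c(sigma(e)) bijections, so both
   classes have as many faces as the family of f, and a face lying in both
   classes forces them to coincide. *)

Lemma card_le_rel (T : finType) (A B : {set T}) (R : T -> T -> Prop) :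
  (forall a, a \in A -> exists2 b, b \in B & R a b) ->
  (forall a a' b, a \in A -> a' \in A -> b \in B -> R a b -> R a' b -> a = a') ->
  #|A| <= #|B|.
Proof.
move=> AB Rinj.
pose g a := epsilon (inhabits a) (fun b => b \in B /\ R a b).
have gP a : a \in A -> g a \in B /\ R a (g a).
  move=> /AB [b Bb Rab].
  by apply: (epsilon_spec (inhabits a) (fun b => b \in B /\ R a b)); exists b.
have g_inj : {in A &, injective g}.
  move=> a a' Aa Aa' E; have [Bga Raga] := gP _ Aa; have [_] := gP _ Aa'.
  by rewrite -E; apply: Rinj.
rewrite -(card_in_imset g_inj).
by apply/subset_leq_card/subsetP => _ /imsetP [a /gP [Bga _] ->].
Qed.

Lemma card_bij_rel (T : finType) (A B : {set T}) (R : T -> T -> Prop) :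
  (forall a, a \in A -> exists2 b, b \in B & R a b) ->
  (forall b, b \in B -> exists2 a, a \in A & R a b) ->
  (forall a b b', a \in A -> b \in B -> b' \in B -> R a b -> R a b' -> b = b') ->
  (forall a a' b, a \in A -> a' \in A -> b \in B -> R a b -> R a' b -> a = a') ->
  #|A| = #|B|.
Proof.
move=> AB BA Rfun Rinj; apply/eqP.
rewrite eqn_leq (card_le_rel AB Rinj) (@card_le_rel _ B A (fun b a => R a b)) //.
by move=> b b' a Bb Bb' Aa; apply: Rfun.
Qed.

Lemma asboolP (P : Prop) : asbool P <-> P.
Proof. by rewrite /asbool; case: excluded_middle_informative. Qed.

Section Labels.
Variable n : nat.
Implicit Types (l : label n) (a c k : signed n) (A B C : pset n).

Lemma bnd_inj (b b' : bool) : bnd b = bnd b' -> b = b'.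
Proof. by case: b; case: b' => //= H; lra. Qed.

Lemma bnd_neq0 (b : bool) : bnd b <> R0.
Proof. by case: b => /= H; lra. Qed.

Lemma seteq_psub A B : seteq A B -> psub A B.
Proof. by move=> H x /H. Qed.

Lemma seteq_psubr A B : seteq A B -> psub B A.
Proof. by move=> H x /H. Qed.

Lemma seteq_sym A B : seteq A B -> seteq B A.
Proof. by move=> H x; split => /H. Qed.

Lemma seteq_trans A B C : seteq A B -> seteq B C -> seteq A C.
Proof. by move=> H1 H2 x; split => [/H1/H2|/H2/H1]. Qed.

Lemma psub_trans A B C : psub A B -> psub B C -> psub A C.
Proof. by move=> H1 H2 x /H1/H2. Qed.

Lemma psub_antisym A B : psub A B -> psub B A -> seteq A B.
Proof. by move=> H1 H2 x; split => [/H1|/H2]. Qed.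

Definition center l : point n :=
  fun i => if l i is Some b then bnd b else R0.

Lemma center_face l : face_set l (center l).
Proof.
split=> [i|i b li]; last by rewrite /center li.
by rewrite /center; case: (l i) => [[]|] /=; lra.
Qed.

Lemma face_sub_fixed l l' : psub (face_set l) (face_set l') ->
  forall i b, l' i = Some b -> l i = Some b.
Proof.
move=> sub i b l'i; have [_ /(_ i b l'i)] := sub _ (center_face l).
rewrite /center; case: (l i) => [b' /bnd_inj -> //|E].
by have := @bnd_neq0 b; rewrite E.
Qed.

Lemma fixed_face_sub l l' : (forall i b, l' i = Some b -> l i = Some b) ->
  psub (face_set l) (face_set l').
Proof. by move=> H x [cx fx]; split=> // i b /H /fx. Qed.

Lemma face_set_inj l l' : seteq (face_set l) (face_set l') -> l = l'.
Proof.
move=> E; apply/ffunP => i.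
have S1 := face_sub_fixed (seteq_psub E); have S2 := face_sub_fixed (seteq_psubr E).
case El: (l i) => [b|]; case El': (l' i) => [b'|] //.
- by rewrite (S1 _ _ El') in El.
- by rewrite (S2 _ _ El) in El'.
- by rewrite (S1 _ _ El') in El.
Qed.

(* [Xi l a]: the facet F(a) belongs to Xi(l), i.e. contains the face [l]. *)
Definition Xi l a := l a.1 = Some a.2.

Lemma facet_labelE a i : facet_label a i = if i == a.1 then Some a.2 else None.
Proof. by rewrite ffunE. Qed.

Lemma Xi_facet a : Xi (facet_label a) a.
Proof. by rewrite /Xi facet_labelE eqxx. Qed.

Lemma sub_facetP l a : psub (face_set l) (facet a) <-> Xi l a.
Proof.
split=> [sub|la]; first exact: face_sub_fixed sub _ _ (Xi_facet a).
by apply: fixed_face_sub => i b; rewrite facet_labelE; case: eqP => // -> [<-].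
Qed.

Lemma Xi_sub l l' a : psub (face_set l) (face_set l') -> Xi l' a -> Xi l a.
Proof. by move=> sub /sub_facetP la; apply/sub_facetP; apply: psub_trans la. Qed.

Lemma Xi_proper l a : Xi l a -> proper_face l.
Proof. by move=> la; apply/existsP; exists a.1; rewrite la. Qed.

Lemma Xi_coord_inj l a a' : Xi l a -> Xi l a' -> a.1 = a'.1 -> a = a'.
Proof.
case: a a' => i b [i' b']; rewrite /Xi /= => la la' E; subst i'.
by move: la'; rewrite la => -[->].
Qed.

Lemma Xi_coord_neq l a k : Xi l a -> Xi l k -> a <> k -> a.1 != k.1.
Proof. by move=> la lk ak; apply/eqP => /(Xi_coord_inj la lk). Qed.

Lemma facet_labelP l k : Xi l k ->
  l = facet_label k \/ exists2 b, Xi l b & b.1 != k.1.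
Proof.
move=> lk; have [/existsP [i /andP [ik li]]|none] :=
  boolP [exists i, (i != k.1) && (l i != None)].
  by right; move: li; case E: (l i) => [v|] // _; exists (i, v).
left; apply/ffunP => i; rewrite facet_labelE; case: eqP => [->|/eqP ik] //.
by apply/eqP; apply: contraNT none => li; apply/existsP; exists i; rewrite ik.
Qed.

Definition ridge_label a k : label n :=
  [ffun i => if i == a.1 then Some a.2 else if i == k.1 then Some k.2 else None].

Lemma Xi_ridgel a k : Xi (ridge_label a k) a.
Proof. by rewrite /Xi ffunE eqxx. Qed.

Lemma Xi_ridger a k : a.1 != k.1 -> Xi (ridge_label a k) k.
Proof. by move=> ak; rewrite /Xi ffunE eq_sym (negPf ak) eqxx. Qed.

Lemma Xi_ridge a k c : Xi (ridge_label a k) c -> c = a \/ c = k.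
Proof.
case: c => i b; rewrite /Xi ffunE /=.
by case: eqP => [-> [<-]|_]; [left; case: a|case: eqP => // -> [<-]; right; case: k].
Qed.

Lemma sub_ridge_label l a k : Xi l a -> Xi l k ->
  psub (face_set l) (face_set (ridge_label a k)).
Proof.
move=> la lk; apply: fixed_face_sub => i b; rewrite ffunE.
by case: eqP => [-> [<-]|_] //; case: eqP => // -> [<-].
Qed.

Lemma ridge_label_neq_facet a k : a.1 != k.1 -> ridge_label a k <> facet_label k.
Proof. by move=> ak E; move: (Xi_ridgel a k); rewrite E /Xi facet_labelE (negPf ak). Qed.

Lemma F2_ridge a k : a.1 != k.1 \/ a = k -> seteq (F2 a k) (face_set (ridge_label a k)).
Proof.
move=> ak; apply: psub_antisym => [x [[cx xa] [_ xk]]|x rx].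
  split=> // i b; rewrite ffunE.
  case: eqP => [-> [<-]|_]; first by apply: xa; apply: Xi_facet.
  by case: eqP => // -> [<-]; apply: xk; apply: Xi_facet.
have rk : Xi (ridge_label a k) k by case: ak => [/Xi_ridger|<-] //; apply: Xi_ridgel.
by split; [move/sub_facetP: (Xi_ridgel a k)|move/sub_facetP: rk]; apply.
Qed.

Lemma label_eq_Xi l l' : (forall a, Xi l a <-> Xi l' a) -> l = l'.
Proof.
move=> E; apply/face_set_inj/psub_antisym; apply: fixed_face_sub => i b.
  by move=> /(E (i, b)).
by move=> /(E (i, b)).
Qed.

Lemma F2C a k : seteq (F2 a k) (F2 k a).
Proof. by move=> x; split=> -[]. Qed.

Lemma face_sub_F2 l a k : Xi l a -> Xi l k -> psub (face_set l) (F2 a k).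
Proof. by move=> /sub_facetP la /sub_facetP lk x lx; split; [apply: la|apply: lk]. Qed.

Lemma ridge_label_diag c : ridge_label c c = facet_label c.
Proof. by apply/ffunP => i; rewrite ffunE facet_labelE; case: eqP. Qed.

Lemma F2_coords a k x : F2 a k x -> a.1 != k.1 \/ a = k.
Proof.
case: (eqVneq a.1 k.1) => [E [[_ xa] [_ xk]]|]; last by left.
right; have := xa _ _ (Xi_facet a); rewrite E (xk _ _ (Xi_facet k)) => /bnd_inj E2.
by move: E E2; clear; case: a => ? ?; case: k => ? ? /= -> ->.
Qed.

Lemma ridge_label_inj c c' w : ridge_label c w = ridge_label c' w -> c = c'.
Proof.
move=> E.
have /Xi_ridge [//|cw] : Xi (ridge_label c' w) c by rewrite -E; apply: Xi_ridgel.
have /Xi_ridge [|->] // : Xi (ridge_label c w) c' by rewrite E; apply: Xi_ridgel.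
Qed.

End Labels.

Section Pairing.
Variable n : nat.
Variables (om : signed n -> signed n) (tau : signed n -> point n -> point n).
Hypothesis fps : is_fps om tau.
Implicit Types (l : label n) (a c k : signed n) (A B : pset n).

Lemma om_invol k : om (om k) = k.
Proof. by case: fps. Qed.

Lemma tau_into k x : facet k x -> facet (om k) (tau k x).
Proof. by case: fps => _ [H _] kx; apply: H; exists x. Qed.

Lemma tau_onto k y : facet (om k) y -> exists x, facet k x /\ y = tau k x.
Proof. by case: fps => _ [_ [H _]] /H. Qed.

Lemma tau_face k l : proper_face l -> psub (face_set l) (facet k) ->
  is_face (img (tau k) (face_set l)).
Proof. by case: fps => _ [_ [_ [_ [H _]]]]; apply: H. Qed.

Lemma tauK k x : facet k x -> tau (om k) (tau k x) = x.
Proof. by case: fps => _ [_ [_ [_ [_ [H _]]]]]; apply: H. Qed.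

Lemma tau_cycle j k k' j' : j.1 != k.1 ->
  seteq (img (tau j) (F2 j k)) (F2 (om j) k') ->
  seteq (img (tau k) (F2 j k)) (F2 j' (om k)) ->
  forall p, F2 j k p -> tau k' (tau j p) = tau j' (tau k p).
Proof. by case: fps => _ [_ [_ [_ [_ [_ H]]]]]; apply: H. Qed.

Lemma img_psub (t : point n -> point n) A B : psub A B -> psub (img t A) (img t B).
Proof. by move=> sub y [x [Ax ->]]; exists x; split => //; apply: sub. Qed.

Lemma img_seteq (t : point n -> point n) A B : seteq A B -> seteq (img t A) (img t B).
Proof. by move=> E; apply: psub_antisym; apply: img_psub => x /E. Qed.

Lemma img_ext (t t' : point n -> point n) A : (forall x, A x -> t x = t' x) ->
  seteq (img t A) (img t' A).
Proof. by move=> tt' y; split=> -[x [Ax ->]]; exists x; rewrite tt'. Qed.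

Lemma img_comp (t t' : point n -> point n) A :
  seteq (img t' (img t A)) (img (fun x => t' (t x)) A).
Proof.
move=> y; split=> [[_ [[x [Ax ->]] ->]]|[x [Ax ->]]]; first by exists x.
by exists (t x); split => //; exists x.
Qed.

Lemma img_id A : seteq (img id A) A.
Proof. by move=> y; split=> [[x [Ax ->]] //|Ay]; exists y. Qed.

Lemma img_tau_facet k : seteq (img (tau k) (facet k)) (facet (om k)).
Proof.
apply: psub_antisym => [_ [x [kx ->]]|y /tau_onto [x [kx ->]]]; first exact: tau_into.
by exists x.
Qed.

Lemma img_tauK k A : psub A (facet k) -> seteq (img (tau (om k)) (img (tau k) A)) A.
Proof.
move=> Ak; apply: seteq_trans (img_comp _ _ _) _.
by apply: seteq_trans (img_id A); apply: img_ext => x /Ak /tauK.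
Qed.

(* The label of the face tau_k(l); when F(k) does not contain l it is junk. *)
Definition tau_lab k l : label n :=
  if excluded_middle_informative
       (exists l', seteq (img (tau k) (face_set l)) (face_set l')) is left H
  then proj1_sig (constructive_indefinite_description _ H) else l.

Lemma tau_labE k l : Xi l k -> seteq (img (tau k) (face_set l)) (face_set (tau_lab k l)).
Proof.
move=> lk; rewrite /tau_lab; case: excluded_middle_informative => [H|[]].
  by case: constructive_indefinite_description.
have [l' [_ E]] := tau_face (Xi_proper lk) (proj2 (sub_facetP _ _) lk).
by exists l'.
Qed.

Lemma Xi_tau_lab k l : Xi l k -> Xi (tau_lab k l) (om k).
Proof.
move=> lk; apply/sub_facetP/(psub_trans (seteq_psubr (tau_labE lk))).
by move=> _ [x [lx ->]]; apply/tau_into/(proj2 (sub_facetP _ _) lk).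
Qed.

Lemma tau_labK k l : Xi l k -> tau_lab (om k) (tau_lab k l) = l.
Proof.
move=> lk; apply: face_set_inj.
apply: seteq_trans (seteq_sym (tau_labE (Xi_tau_lab lk))) _.
apply: seteq_trans (img_seteq _ (seteq_sym (tau_labE lk))) _.
exact/img_tauK/sub_facetP.
Qed.

Lemma tau_lab_sub k l l' : Xi l k -> Xi l' k -> psub (face_set l) (face_set l') ->
  psub (face_set (tau_lab k l)) (face_set (tau_lab k l')).
Proof.
move=> lk l'k ll'; apply: psub_trans (seteq_psubr (tau_labE lk)) _.
exact: psub_trans (img_psub ll') (seteq_psub (tau_labE l'k)).
Qed.

Lemma tau_lab_facet k : tau_lab k (facet_label k) = facet_label (om k).
Proof.
apply: face_set_inj; apply: seteq_trans (seteq_sym (tau_labE (Xi_facet k))) _.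
exact: img_tau_facet.
Qed.

Lemma tau_lab_eq_facet k l : Xi l k -> tau_lab k l = facet_label (om k) -> l = facet_label k.
Proof. by move=> lk E; rewrite -(tau_labK lk) E tau_lab_facet om_invol. Qed.

End Pairing.

Section Psi.
Variable n : nat.
Variables (om : signed n -> signed n) (tau : signed n -> point n -> point n).
Hypothesis fps : is_fps om tau.
Implicit Types (l : label n) (a c k : signed n).
Local Notation tau_lab := (tau_lab tau).
Local Notation psi := (psi_rel om tau).

(* tau_k maps the ridge F(a,k) onto a ridge of F(om k): its image has a second
   fixed coordinate b, and the ridge F(b, om k) is mapped back inside F(a,k). *)
Lemma tau_lab_ridge a k : a.1 != k.1 ->
  exists2 c, c.1 != (om k).1 & tau_lab k (ridge_label a k) = ridge_label c (om k).
Proof.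
move=> ak; set A := ridge_label a k; have Ak : Xi A k := Xi_ridger ak.
have Lok := Xi_tau_lab fps Ak; set L := tau_lab k A in Lok *.
have [/(tau_lab_eq_facet fps Ak)/(ridge_label_neq_facet ak) []|[b Lb bk]] :=
  facet_labelP Lok.
set B := ridge_label b (om k); have Bok : Xi B (om k) := Xi_ridger bk.
have Mk := Xi_tau_lab fps Bok; rewrite (om_invol fps) in Mk.
have AM : psub (face_set A) (face_set (tau_lab (om k) B)).
  by rewrite -(tau_labK fps Ak); apply: (tau_lab_sub fps Lok Bok); apply: sub_ridge_label.
have [Mfacet|[j Mj jk]] := facet_labelP Mk.
  case: (ridge_label_neq_facet bk).
  by rewrite -/B -(tau_labK fps Bok) (om_invol fps) Mfacet (tau_lab_facet fps).
have ja : j = a.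
  by case: (Xi_ridge (Xi_sub AM Mj)) => // jk'; rewrite jk' eqxx in jk.
have MA : tau_lab (om k) B = A.
  by apply/face_set_inj/psub_antisym => //; apply: sub_ridge_label; rewrite -?ja.
exists b => //; rewrite /L -MA; have := tau_labK fps Bok; by rewrite (om_invol fps).
Qed.

Lemma psi_relE k a c : a.1 != k.1 ->
  psi k a c <-> c.1 != (om k).1 /\ tau_lab k (ridge_label a k) = ridge_label c (om k).
Proof.
move=> ak; have Ak : Xi (ridge_label a k) k := Xi_ridger ak.
have imgE : seteq (img (tau k) (F2 a k)) (face_set (tau_lab k (ridge_label a k))).
  exact: seteq_trans (img_seteq _ (F2_ridge (or_introl ak))) (tau_labE fps Ak).
split=> [[[ak' _]|[_ E]]|[ck E]]; first by rewrite ak' eqxx in ak.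
  have cE := seteq_trans E imgE.
  have co := F2_coords (seteq_psubr cE (center_face _)).
  have E' : tau_lab k (ridge_label a k) = ridge_label c (om k).
    exact/face_set_inj/(seteq_trans (seteq_sym cE))/F2_ridge.
  split=> //; case: co => // co; move: E'; rewrite co ridge_label_diag.
  by move/(tau_lab_eq_facet fps Ak)/(ridge_label_neq_facet ak).
right; split=> [ak'|]; first by rewrite ak' eqxx in ak.
by apply: seteq_trans (F2_ridge (or_introl ck)) _; rewrite -E; apply: seteq_sym.
Qed.

Lemma psi_exists l k a : Xi l k -> Xi l a -> exists c, psi k a c.
Proof.
move=> lk la; have [->|/eqP ak] := eqVneq a k; first by exists (om k); left.
have [c ck E] := tau_lab_ridge (Xi_coord_neq la lk ak).
by exists c; apply/(psi_relE _ (Xi_coord_neq la lk ak)).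
Qed.

Lemma psi_Xi l k a c : Xi l k -> Xi l a -> psi k a c -> Xi (tau_lab k l) c.
Proof.
move=> lk la; have [->|/eqP ak] := eqVneq a k.
  by case=> [[_ ->]|[]] //; apply: Xi_tau_lab.
have ak1 := Xi_coord_neq la lk ak; move/(psi_relE _ ak1) => [_ E].
apply: Xi_sub (tau_lab_sub fps lk (Xi_ridger ak1) (sub_ridge_label la lk)) _.
by rewrite E; apply: Xi_ridgel.
Qed.

Lemma psi_from_self k c : psi k k c -> c = om k.
Proof. by case=> [[_ ->]|[]]. Qed.

Lemma psi_to_om l k a : Xi l k -> Xi l a -> psi k a (om k) -> a = k.
Proof.
move=> lk la; have [//|/eqP ak] := eqVneq a k.
by move/(psi_relE _ (Xi_coord_neq la lk ak)) => [/eqP].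
Qed.

Lemma psi_fun l k a c c' : Xi l k -> Xi l a -> psi k a c -> psi k a c' -> c = c'.
Proof.
move=> lk la; have [->|/eqP ak] := eqVneq a k.
  by move=> /psi_from_self -> /psi_from_self ->.
have ak1 := Xi_coord_neq la lk ak.
by move=> /(psi_relE _ ak1) [_ E] /(psi_relE _ ak1) [_]; rewrite E => /ridge_label_inj.
Qed.

Lemma psi_inj l k a a' c : Xi l k -> Xi l a -> Xi l a' ->
  psi k a c -> psi k a' c -> a = a'.
Proof.
move=> lk la la'; have [->|/eqP ak] := eqVneq a k.
  by move=> /psi_from_self -> /(psi_to_om lk la').
have [->|/eqP a'k] := eqVneq a' k.
  by move=> ac /psi_from_self cE; move: ac; rewrite cE => /(psi_to_om lk la).
have ak1 := Xi_coord_neq la lk ak; have a'k1 := Xi_coord_neq la' lk a'k.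
move=> /(psi_relE _ ak1) [_ E] /(psi_relE _ a'k1) [_]; rewrite -E.
move/(congr1 (tau_lab (om k))).
rewrite (tau_labK fps (Xi_ridger ak1)) (tau_labK fps (Xi_ridger a'k1)).
by move/ridge_label_inj.
Qed.

Lemma psi_surj l k c : Xi l k -> Xi (tau_lab k l) c -> exists2 a, Xi l a & psi k a c.
Proof.
move=> lk lc; have [->|/eqP co] := eqVneq c (om k); first by exists k => //; left.
have Lo := Xi_tau_lab fps lk; have [a ca] := psi_exists Lo lc.
have la : Xi l a by have := psi_Xi Lo lc ca; rewrite (tau_labK fps).
exists a => //; have co1 := Xi_coord_neq lc Lo co.
move/(psi_relE _ co1): ca => [ak E]; rewrite (om_invol fps) in ak E.
apply/(psi_relE _ ak); split=> //; rewrite -E.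
by have := tau_labK fps (Xi_ridger co1); rewrite (om_invol fps).
Qed.

Lemma tau_lab_cycle y c k' k c'' : Xi y c -> Xi y k' -> k' <> c ->
  psi c k' k -> psi k' c c'' -> tau_lab k (tau_lab c y) = tau_lab c'' (tau_lab k' y).
Proof.
move=> yc yk' k'c ck k'c''.
have cyc : forall p, F2 c k' p -> tau k (tau c p) = tau c'' (tau k' p).
  apply: (tau_cycle fps (Xi_coord_neq yc yk' (nesym k'c))).
    case: ck => [[/k'c //]|[_ E]].
    apply: seteq_trans (img_seteq _ (F2C _ _)) _.
    exact: seteq_trans (seteq_sym E) (F2C _ _).
  by case: k'c'' => [[/esym/k'c //]|[_ E]]; apply: seteq_sym.
apply: face_set_inj.
apply: seteq_trans (seteq_sym (tau_labE fps (psi_Xi yc yk' ck))) _.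
apply: seteq_trans (img_seteq _ (seteq_sym (tau_labE fps yc))) _.
apply: seteq_trans (img_comp _ _ _) _.
apply: seteq_trans (img_ext (fun p yp => cyc p (face_sub_F2 yc yk' yp))) _.
apply: seteq_trans (seteq_sym (img_comp _ _ _)) _.
apply: seteq_trans (img_seteq _ (tau_labE fps yk')) _.
by apply: (tau_labE fps); apply: psi_Xi k'c''.
Qed.

End Psi.

Section Chains.
Variable n : nat.
Variables (om : signed n -> signed n) (tau : signed n -> point n -> point n).
Hypothesis fps : is_fps om tau.
Implicit Types (l : label n) (a b c k : signed n) (ks : seq (signed n)).
Local Notation tau_lab := (tau_lab tau).
Local Notation psi := (psi_rel om tau).
Local Notation chain := (psi_chain om tau).

Fixpoint tau_labs ks l : label n :=
  if ks is k :: ks' then tau_labs ks' (tau_lab k l) else l.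

Fixpoint valid_labs ks l : Prop :=
  if ks is k :: ks' then Xi l k /\ valid_labs ks' (tau_lab k l) else True.

Lemma tau_labs_rcons ks k l : tau_labs (rcons ks k) l = tau_lab k (tau_labs ks l).
Proof. by elim: ks l => //= k' ks IH l; rewrite IH. Qed.

Lemma valid_labs_rcons ks k l :
  valid_labs (rcons ks k) l <-> valid_labs ks l /\ Xi (tau_labs ks l) k.
Proof. by elim: ks l => /= [|k' ks IH] l; [tauto|rewrite IH; tauto]. Qed.

Lemma chain_rcons ks k a b : chain (rcons ks k) a b <-> exists2 c, chain ks a c & psi k c b.
Proof.
elim: ks a => /= [|k' ks IH] a.
  by split=> [[c [ac <-]]|[c <- cb]]; [exists a|exists b].
split=> [[c [ac /IH [d cd db]]]|[d [c [ac cd] db]]]; first by exists d => //; exists c.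
by exists c; split => //; apply/IH; exists d.
Qed.

Lemma chain_exists ks l a : valid_labs ks l -> Xi l a ->
  exists2 b, chain ks a b & Xi (tau_labs ks l) b.
Proof.
elim: ks l a => /= [|k ks IH] l a; first by move=> _ la; exists a.
move=> [lk v] la; have [c ac] := psi_exists fps lk la.
have [b cb lb] := IH _ _ v (psi_Xi fps lk la ac).
by exists b => //; exists c.
Qed.

Lemma chain_Xi ks l a b : valid_labs ks l -> Xi l a -> chain ks a b -> Xi (tau_labs ks l) b.
Proof.
elim: ks l a => /= [|k ks IH] l a; first by move=> _ la <-.
by move=> [lk v] la [c [ac cb]]; apply: IH v (psi_Xi fps lk la ac) cb.
Qed.

Lemma chain_fun ks l a b b' : valid_labs ks l -> Xi l a ->
  chain ks a b -> chain ks a b' -> b = b'.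
Proof.
elim: ks l a => /= [|k ks IH] l a; first by move=> _ _ <- <-.
move=> [lk v] la [c [ac cb]] [c' [ac' cb']].
move: cb'; rewrite -(psi_fun fps lk la ac ac') => cb'.
exact: IH v (psi_Xi fps lk la ac) cb cb'.
Qed.

Lemma chain_inj ks l a a' b : valid_labs ks l -> Xi l a -> Xi l a' ->
  chain ks a b -> chain ks a' b -> a = a'.
Proof.
elim: ks l a a' => /= [|k ks IH] l a a'; first by move=> _ _ _ -> ->.
move=> [lk v] la la' [c [ac cb]] [c' [ac' cb']].
have cc' := IH _ _ _ v (psi_Xi fps lk la ac) (psi_Xi fps lk la' ac') cb cb'.
by move: ac'; rewrite -cc'; exact: (psi_inj fps lk la la' ac).
Qed.

Lemma chain_surj ks l b : valid_labs ks l -> Xi (tau_labs ks l) b ->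
  exists2 a, Xi l a & chain ks a b.
Proof.
elim: ks l b => /= [|k ks IH] l b; first by move=> _ lb; exists b.
move=> [lk v] lb; have [c lc cb] := IH _ _ v lb.
by have [a la ac] := psi_surj fps lk lc; exists a => //; exists c.
Qed.

Lemma tau_labsE ks l : valid_labs ks l ->
  seteq (img (tcomp tau ks) (face_set l)) (face_set (tau_labs ks l)).
Proof.
elim: ks l => /= [|k ks IH] l; first by move=> _; apply: img_id.
move=> [lk v]; apply: seteq_trans (seteq_sym (img_comp _ _ _)) _.
exact: seteq_trans (img_seteq _ (tau_labE fps lk)) (IH _ v).
Qed.

Lemma valid_seteq ks (A B : pset n) : seteq A B -> valid tau A ks -> valid tau B ks.
Proof.
elim: ks A B => //= k ks IH A B AB [Ak v]; split.
  exact: psub_trans (seteq_psubr AB) Ak.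
exact: IH (img_seteq _ AB) v.
Qed.

Lemma valid_labsP ks l : valid tau (face_set l) ks <-> valid_labs ks l.
Proof.
elim: ks l => //= k ks IH l; split=> [[/sub_facetP lk v]|[lk v]].
  by split=> //; apply/IH/(valid_seteq (tau_labE fps lk)).
by split; [apply/sub_facetP|apply/(valid_seteq (seteq_sym (tau_labE fps lk)))/IH].
Qed.

Lemma in_familyP l g : in_family tau l g <-> exists2 ks, valid_labs ks l & tau_labs ks l = g.
Proof.
split=> [[ks [/valid_labsP v E]]|[ks v <-]].
  by exists ks => //; apply/face_set_inj/(seteq_trans (seteq_sym (tau_labsE v))).
by exists ks; split; [apply/valid_labsP|apply: tau_labsE].
Qed.

Lemma tau_labs_sub ks l l' : psub (face_set l) (face_set l') -> valid_labs ks l' ->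
  valid_labs ks l /\ psub (face_set (tau_labs ks l)) (face_set (tau_labs ks l')).
Proof.
elim: ks l l' => //= k ks IH l l' ll' [l'k v].
have lk := Xi_sub ll' l'k.
by have [] := IH _ _ (tau_lab_sub fps lk l'k ll') v.
Qed.

Lemma chain_rcons_self ks a c : chain ks a c -> chain (rcons ks c) a (om c).
Proof. by move=> ac; apply/chain_rcons; exists c => //; left. Qed.

Hypothesis st : strong om tau.

Lemma strong_labs l ks1 ks2 : proper_face l ->
  valid_labs ks1 l -> valid_labs ks2 l -> tau_labs ks1 l = tau_labs ks2 l ->
  (forall p, face_set l p -> tcomp tau ks1 p = tcomp tau ks2 p) /\
  (forall a b1 b2, Xi l a -> chain ks1 a b1 -> chain ks2 a b2 -> b1 = b2).
Proof.
move=> pl v1 v2 E.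
have v2E : seteq (img (tcomp tau ks2) (face_set l)) (face_set (tau_labs ks1 l)).
  by rewrite E; apply: tau_labsE.
have [tcompE chainE] :=
  st pl (proj2 (valid_labsP _ _) v1) (proj2 (valid_labsP _ _) v2) (tau_labsE v1) v2E.
by split=> // a b1 b2 /sub_facetP; apply: chainE.
Qed.

Lemma strong_chain l ks1 ks2 a b1 b2 : proper_face l ->
  valid_labs ks1 l -> valid_labs ks2 l -> tau_labs ks1 l = tau_labs ks2 l ->
  Xi l a -> chain ks1 a b1 -> chain ks2 a b2 -> b1 = b2.
Proof. by move=> pl v1 v2 E; case: (strong_labs pl v1 v2 E) => _; apply. Qed.

End Chains.

Section Codim1.
Variable n : nat.
Implicit Types (l : label n).

Definition fixed l : {set 'I_n} := [set i | l i != None].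

Lemma fdim_fixed l : fdim l + #|fixed l| = n.
Proof.
rewrite -[RHS](card_ord n) -(cardsC (fixed l)) addnC; congr (_ + _).
by apply: eq_card => i; rewrite !inE negbK.
Qed.

Lemma fixed_sub l l' : psub (face_set l) (face_set l') -> fixed l' \subset fixed l.
Proof.
move=> ll'; apply/subsetP => i; rewrite !inE.
by case E: (l' i) => [b|] //; rewrite (face_sub_fixed ll' E).
Qed.

Lemma codim1_extra_facet e f : psub (face_set e) (face_set f) -> fdim f = (fdim e).+1 ->
  exists a0 : signed n,
    [/\ Xi e a0, ~ Xi f a0 & forall a : signed n, Xi e a -> a = a0 \/ Xi f a].
Proof.
move=> ef dimf; have sfe := fixed_sub ef.
have : #|fixed e :\: fixed f| = 1.
  have card_e : #|fixed e| = #|fixed f|.+1.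
    by apply/eqP; rewrite -(eqn_add2l (fdim e)) fdim_fixed -addSnnS -dimf fdim_fixed.
  by rewrite cardsD (setIidPr sfe) card_e subSnn.
move=> /eqP/cards1P [i0 Ei0].
have : i0 \in fixed e :\: fixed f by rewrite Ei0 set11.
rewrite !inE negbK => /andP [/eqP fi0]; case ei0: (e i0) => [b0|] // _.
exists (i0, b0); split=> //; first by rewrite /Xi fi0.
move=> [i b]; rewrite /Xi /= => eib; case fi: (f i) => [b'|]; last first.
  have : i \in fixed e :\: fixed f by rewrite !inE fi eib.
  by rewrite Ei0 => /set1P ie; move: eib; rewrite ie ei0 => -[->]; left.
by right; move: eib; rewrite (face_sub_fixed ef fi) => -[->].
Qed.

End Codim1.

Section Counting.
Variable n : nat.
Variables (om : signed n -> signed n) (tau : signed n -> point n -> point n).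
Hypotheses (fps : is_fps om tau) (st : strong om tau).
Variables (e f : label n) (a0 : signed n).
Hypotheses (ef : psub (face_set e) (face_set f)) (f_proper : proper_face f).
Hypotheses (ea0 : Xi e a0) (fNa0 : ~ Xi f a0).
Hypothesis Xi_e : forall a, Xi e a -> a = a0 \/ Xi f a.
Implicit Types (x y : label n) (a b c k : signed n) (ks : seq (signed n)).
Local Notation tau_lab := (tau_lab tau).
Local Notation tau_labs := (tau_labs tau).
Local Notation valid_labs := (valid_labs tau).
Local Notation chain := (psi_chain om tau).

Let e_proper : proper_face e := Xi_proper ea0.

Lemma valid_f_e ks : valid_labs ks f ->
  valid_labs ks e /\ psub (face_set (tau_labs ks e)) (face_set (tau_labs ks f)).
Proof. by move=> v; apply: (tau_labs_sub fps ef v). Qed.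

Lemma Xi_chain_a0 ks c : valid_labs ks f -> chain ks a0 c -> Xi (tau_labs ks e) c.
Proof. by move=> /valid_f_e [v _]; apply: (chain_Xi fps v ea0). Qed.

Lemma chain_a0_notin_f ks c : valid_labs ks f -> chain ks a0 c -> ~ Xi (tau_labs ks f) c.
Proof.
move=> v a0c /(chain_surj fps v) [a fa ac]; apply: fNa0.
by rewrite (chain_inj fps (proj1 (valid_f_e v)) ea0 (Xi_sub ef fa) a0c ac).
Qed.

Lemma Xi_e_f ks c k : valid_labs ks f -> chain ks a0 c ->
  Xi (tau_labs ks e) k -> k <> c -> Xi (tau_labs ks f) k.
Proof.
move=> v a0c; have [ve _] := valid_f_e v.
move=> /(chain_surj fps ve) [a /Xi_e [->|fa] ak kc]; last exact: (chain_Xi fps v fa ak).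
by case: kc; apply: (chain_fun fps ve ea0 ak a0c).
Qed.

Definition along x := exists2 ks, valid_labs ks f & tau_labs ks e = x.
Definition across x :=
  exists ks c, [/\ valid_labs ks f, chain ks a0 c & tau_lab c (tau_labs ks e) = x].

Lemma valid_across ks c : valid_labs ks f -> chain ks a0 c -> valid_labs (rcons ks c) e.
Proof.
move=> v a0c; apply/valid_labs_rcons; split; first by case: (valid_f_e v).
exact: Xi_chain_a0 v a0c.
Qed.

Lemma across_step ks c k : valid_labs ks f -> chain ks a0 c ->
  Xi (tau_lab c (tau_labs ks e)) k -> k <> om c ->
  across (tau_lab k (tau_lab c (tau_labs ks e))).
Proof.
move=> v a0c; set y := tau_labs ks e => yk ko.
have yc : Xi y c := Xi_chain_a0 v a0c.
have [k' yk' ck] := psi_surj fps yc yk.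
have k'c : k' <> c by move=> E; apply: ko; move: ck; rewrite E => /psi_from_self.
have [c'' k'c''] := psi_exists fps yk' yc.
exists (rcons ks k'), c''; split.
- by apply/valid_labs_rcons; split=> //; apply: Xi_e_f v a0c yk' k'c.
- by apply/chain_rcons; exists c.
- by rewrite tau_labs_rcons (tau_lab_cycle fps yc yk' k'c ck k'c'').
Qed.

Lemma valid_e_cases ks : valid_labs ks e -> along (tau_labs ks e) \/ across (tau_labs ks e).
Proof.
elim/last_ind: ks => [_|ks k IH]; first by left; exists [::].
move=> /valid_labs_rcons [v ek]; rewrite tau_labs_rcons.
case: (IH v) => [[ks' v' E]|[ks' [c [v' a0c E]]]].
  have [c a0c _] := chain_exists fps (proj1 (valid_f_e v')) ea0.
  have [kc|/eqP kc] := eqVneq k c; first by right; exists ks', c; rewrite E kc.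
  left; exists (rcons ks' k); last by rewrite tau_labs_rcons E.
  by apply/valid_labs_rcons; split=> //; apply: (Xi_e_f v' a0c); rewrite ?E.
have [ko|/eqP ko] := eqVneq k (om c).
  by left; exists ks'; rewrite // -E ko (tau_labK fps) //; apply: Xi_chain_a0 v' a0c.
by right; rewrite -E; apply: across_step v' a0c _ ko; rewrite E.
Qed.

Definition along_set : {set label n} := [set x | asbool (along x)].
Definition across_set : {set label n} := [set x | asbool (across x)].

Lemma in_along_set x : x \in along_set <-> along x.
Proof. by rewrite inE; apply: asboolP. Qed.

Lemma in_across_set x : x \in across_set <-> across x.
Proof. by rewrite inE; apply: asboolP. Qed.

Lemma in_face_family l x : x \in face_family tau l <->
  exists2 ks, valid_labs ks l & tau_labs ks l = x.
Proof. by rewrite inE; apply: iff_trans (asboolP _) (in_familyP fps l x). Qed.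

Lemma face_family_e : face_family tau e = along_set :|: across_set.
Proof.
apply/setP => x; rewrite in_setU; apply/idP/orP.
  move/in_face_family => [ks v <-].
  by case: (valid_e_cases v) => [/in_along_set|/in_across_set]; [left|right].
case=> [/in_along_set [ks v <-]|/in_across_set [ks [c [v a0c <-]]]]; apply/in_face_family.
  by exists ks; first by case: (valid_f_e v).
by exists (rcons ks c); [apply: valid_across v a0c|rewrite tau_labs_rcons].
Qed.

Lemma chain_a0_unique ks1 ks2 c1 c2 : valid_labs ks1 f -> valid_labs ks2 f ->
  tau_labs ks1 e = tau_labs ks2 e -> chain ks1 a0 c1 -> chain ks2 a0 c2 -> c1 = c2.
Proof.
move=> /valid_f_e [v1 _] /valid_f_e [v2 _] E.
exact: (strong_chain fps st e_proper v1 v2 E ea0).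
Qed.

Lemma tau_labs_f_eq ks1 ks2 : valid_labs ks1 f -> valid_labs ks2 f ->
  tau_labs ks1 e = tau_labs ks2 e -> tau_labs ks1 f = tau_labs ks2 f.
Proof.
have Xi_f ks ks' b : valid_labs ks f -> valid_labs ks' f -> tau_labs ks e = tau_labs ks' e ->
    Xi (tau_labs ks f) b -> Xi (tau_labs ks' f) b.
  move=> v v' E /(chain_surj fps v) [a fa ab].
  have [b' ab' fb'] := chain_exists fps v' fa.
  have [ve _] := valid_f_e v; have [ve' _] := valid_f_e v'.
  by rewrite (strong_chain fps st e_proper ve ve' E (Xi_sub ef fa) ab ab').
by move=> v1 v2 E; apply: label_eq_Xi => b; split; apply: Xi_f.
Qed.

Lemma tau_labs_e_eq ks1 ks2 : valid_labs ks1 f -> valid_labs ks2 f ->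
  tau_labs ks1 f = tau_labs ks2 f -> tau_labs ks1 e = tau_labs ks2 e.
Proof.
move=> v1 v2 E; have [ve1 _] := valid_f_e v1; have [ve2 _] := valid_f_e v2.
apply: face_set_inj; apply: seteq_trans (seteq_sym (tau_labsE fps ve1)) _.
apply: seteq_trans (tau_labsE fps ve2); apply: img_ext => p /ef.
exact: (strong_labs fps st f_proper v1 v2 E).1.
Qed.

Lemma card_along : #|along_set| = #|face_family tau f|.
Proof.
apply: (card_bij_rel (R := fun x g => exists2 ks, valid_labs ks f &
                                        tau_labs ks e = x /\ tau_labs ks f = g)).
- move=> _ /in_along_set [ks v <-].
  by exists (tau_labs ks f); [apply/in_face_family; exists ks|exists ks].
- move=> _ /in_face_family [ks v <-].
  by exists (tau_labs ks e); [apply/in_along_set; exists ks|exists ks].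
- move=> _ _ _ _ _ _ [ks1 v1 [<- <-]] [ks2 v2 [E <-]].
  exact: tau_labs_f_eq.
- move=> _ _ _ _ _ _ [ks1 v1 [<- <-]] [ks2 v2 [<- E]].
  exact: tau_labs_e_eq.
Qed.

Lemma across_reflect_inj ks1 ks2 c1 c2 : valid_labs ks1 f -> valid_labs ks2 f ->
  chain ks1 a0 c1 -> chain ks2 a0 c2 ->
  tau_lab c1 (tau_labs ks1 e) = tau_lab c2 (tau_labs ks2 e) ->
  tau_labs ks1 e = tau_labs ks2 e.
Proof.
move=> v1 v2 a0c1 a0c2 E.
have Erc : tau_labs (rcons ks1 c1) e = tau_labs (rcons ks2 c2) e by rewrite !tau_labs_rcons.
have Eom := strong_chain fps st e_proper (valid_across v1 a0c1) (valid_across v2 a0c2)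
  Erc ea0 (chain_rcons_self a0c1) (chain_rcons_self a0c2).
have c12 : c1 = c2 by rewrite -(om_invol fps c1) Eom (om_invol fps).
rewrite -(tau_labK fps (Xi_chain_a0 v1 a0c1)) -(tau_labK fps (Xi_chain_a0 v2 a0c2)).
by rewrite E c12.
Qed.

Lemma card_across : #|across_set| = #|along_set|.
Proof.
apply/esym/(card_bij_rel (R := fun x y => exists ks c, [/\ valid_labs ks f,
  tau_labs ks e = x, chain ks a0 c & tau_lab c x = y])).
- move=> _ /in_along_set [ks v <-].
  have [c a0c _] := chain_exists fps (proj1 (valid_f_e v)) ea0.
  by exists (tau_lab c (tau_labs ks e)); [apply/in_across_set; exists ks, c|exists ks, c].
- move=> _ /in_across_set [ks [c [v a0c <-]]].
  by exists (tau_labs ks e); [apply/in_along_set; exists ks|exists ks, c].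
- move=> _ _ _ _ _ _ [ks1 [c1 [v1 <- a0c1 <-]]] [ks2 [c2 [v2 E a0c2 <-]]].
  by rewrite (chain_a0_unique v1 v2 (esym E) a0c1 a0c2) -E.
- move=> _ _ _ _ _ _ [ks1 [c1 [v1 <- a0c1 <-]]] [ks2 [c2 [v2 <- a0c2 E]]].
  exact: across_reflect_inj v1 v2 a0c1 a0c2 (esym E).
Qed.

Lemma across_move ks k : valid_labs ks f -> Xi (tau_labs ks f) k ->
  across (tau_labs ks e) -> across (tau_lab k (tau_labs ks e)).
Proof.
move=> v fk [ks2 [c2 [v2 a0c2 E]]]; have [ve sub_ef] := valid_f_e v.
have [s a0s _] := chain_exists fps ve ea0.
have so : s = om c2.
  have E' : tau_labs ks e = tau_labs (rcons ks2 c2) e by rewrite tau_labs_rcons E.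
  apply: (strong_chain fps st e_proper ve (valid_across v2 a0c2) E' ea0 a0s).
  exact: chain_rcons_self.
rewrite -E; apply: (across_step v2 a0c2); first by rewrite E; apply: Xi_sub sub_ef fk.
by move=> ko; apply: (chain_a0_notin_f v a0s); rewrite so -ko.
Qed.

Lemma across_along ks : valid_labs ks f -> across (tau_labs ks e) <-> across e.
Proof.
elim/last_ind: ks => [//|ks k IH] v; have /valid_labs_rcons [v' fk] := v.
rewrite -(IH v') tau_labs_rcons; split=> [|/(across_move v' fk)] //.
have ek : Xi (tau_labs ks e) k := Xi_sub (proj2 (valid_f_e v')) fk.
have := across_move (k := om k) v; rewrite !tau_labs_rcons (tau_labK fps ek).
by apply; apply: (Xi_tau_lab fps fk).
Qed.

Lemma along_sub_across x : x \in along_set -> x \in across_set -> along_set \subset across_set.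
Proof.
move=> /in_along_set [ks v <-] /in_across_set; rewrite (across_along v) => across_e.
by apply/subsetP => _ /in_along_set [ks' v' <-]; apply/in_across_set/(across_along v').
Qed.

Lemma card_face_family_codim1 : #|face_family tau e| = #|face_family tau f| \/
  #|face_family tau e| = 2 * #|face_family tau f|.
Proof.
rewrite face_family_e -card_along.
have [disjoint|[x]] := set_0Vmem (along_set :&: across_set).
  by right; rewrite cardsU disjoint cards0 subn0 card_across addnn mul2n.
rewrite inE => /andP [x_along x_across]; left.
have along_across : along_set = across_set.
  by apply/eqP; rewrite eqEcard (along_sub_across x_along x_across) card_across /=.
by rewrite -along_across setUid.
Qed.

End Counting.

Theorem mainTheorem5 (n : nat) (om : signed n -> signed n)
    (tau : signed n -> point n -> point n) (e f : label n) :
  regular om tau -> strong om tau ->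
  proper_face e -> proper_face f -> psub (face_set e) (face_set f) ->
  fdim f = (fdim e).+1 ->
  #|face_family tau e| = #|face_family tau f| \/ #|face_family tau e| = 2 * #|face_family tau f|.
Proof.
move=> [fps _ _] st _ f_proper ef dimf.
have [a0 [ea0 fNa0 Xi_e]] := codim1_extra_facet ef dimf.
exact: (card_face_family_codim1 fps st ef f_proper ea0 fNa0 Xi_e).
Qed.
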